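(* Let $R$ be an associative unital division ring over a field of characteristic $0$. Let $\theta_{m,n}\in R$ be invertible for $m\in\mathbb{Z}$, $n\geq1$, with the convention $\theta_{m,0}^{-1}:=0$. Put $a_{m,n}=\theta_{m+1,n}\theta_{m,n}^{-1}$, $b_{m,n}=\theta_{m-1,n+1}\theta_{m,n}^{-1}$. Define semi-infinite matrices (indices $k\geq1$) $$(L_m)_{k,k+1}=1,\quad (L_m)_{k,k}=a_{m-1,k}+b_{m,k},\quad (L_m)_{k+1,k}=a_{m-1,k+1}b_{m,k},\qquad (M_m)_{k,k}=1,\quad (M_m)_{k+1,k}=b_{m,k},$$ all other entries zero. If $L_{m-1}M_m=M_mL_m$ for all $m\in\mathbb{Z}$, then for all $m\in\mathbb{Z}$ and $n\geq1$ $$\theta_{m+2,n}=\theta_{m,n+1}+\theta_{m+1,n}\bigl(\theta_{m,n}^{-1}-\theta_{m+2,n-1}^{-1}\bigr)\theta_{m+1,n}.$$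
   Context: Products of these banded semi-infinite matrices are computed entrywise as finite sums. *)

From mathcomp Require Import all_boot all_order all_algebra.
Set Implicit Arguments. Unset Strict Implicit. Unset Printing Implicit Defensive.
Import GRing.Theory.
Local Open Scope ring_scope.

(* Semi-infinite matrices over R, indexed by k >= 1 (entries at index 0 are
   unused and set to 0): functions nat -> nat -> R. *)
Definition simx (R : Type) := nat -> nat -> R.

(* Product of semi-infinite matrices whose left factor has upper bandwidth
   at most w (A i k = 0 for k > i + w): the full sum \sum_{k>=1} A i k B k j
   reduces to the finite sum over 1 <= k <= i + w. *)
Definition bmul (R : pzRingType) (w : nat) (A B : simx R) : simx R :=
  fun i j => \sum_(1 <= k < (i + w).+1) A i k * B k j.

Section Defs.
Variables (R : unitRingType) (theta : int -> nat -> R).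

Definition thinv (m : int) (n : nat) : R :=
  if n == 0%N then 0 else (theta m n)^-1.

Definition acoef (m : int) (n : nat) : R := theta (m + 1) n * (theta m n)^-1.
Definition bcoef (m : int) (n : nat) : R := theta (m - 1) n.+1 * (theta m n)^-1.

Definition Lmat (m : int) : simx R := fun i j =>
  if (i == 0%N) || (j == 0%N) then 0
  else if j == i.+1 then 1
  else if j == i then acoef (m - 1) i + bcoef m i
  else if i == j.+1 then acoef (m - 1) i * bcoef m j
  else 0.

Definition Mmat (m : int) : simx R := fun i j =>
  if (i == 0%N) || (j == 0%N) then 0
  else if j == i then 1
  else if i == j.+1 then bcoef m j
  else 0.
End Defs.

From mathcomp Require Import all_boot all_order all_algebra.
From mathcomp Require Import ring.
Set Implicit Arguments. Unset Strict Implicit. Unset Printing Implicit Defensive.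
Import GRing.Theory.
Local Open Scope ring_scope.

(* Only the diagonal entries of the Lax equation are needed.  Since [M_m] is
   lower bidiagonal, the (n,n) entries of [L_{m+1} M_{m+2}] and
   [M_{m+2} L_{m+2}] are sums of two terms each, and comparing them gives
     a_{m,n} + b_{m+1,n} = a_{m+1,n} + b_{m+2,n-1},
   where the convention theta_{m,0}^{-1} = 0 makes [b_{m+2,0}] vanish, as the
   missing entry [(M_{m+2})_{1,0}] does.  Multiplying on the right by
   theta_{m+1,n} yields the claimed recurrence. *)

Lemma big_nat_supp2 (V : nmodType) (n p : nat) (F : nat -> V) :
  (p.+1 < n)%N -> (forall k, (k < n)%N -> k != p -> k != p.+1 -> F k = 0) ->
  \sum_(0 <= k < n) F k = F p + F p.+1.
Proof.
move=> lt_p1n F0.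
have le_pn : (p <= n)%N by rewrite ltnW // ltnW.
rewrite (big_cat_nat (leq0n p) le_pn) (@big_cat_nat _ _ _ p.+2 p n) ?leqW //=.
rewrite [\sum_(p <= i < p.+2) F i]big_ltn // big_nat1.
rewrite big_nat_cond big1 => [|k /andP[/andP[_ lt_kp] _]]; last first.
  have lt_kn : (k < n)%N by rewrite (ltn_trans lt_kp) // ltnW.
  by rewrite F0 // ltn_eqF // ltnW.
rewrite add0r [X in _ + X]big_nat_cond [X in _ + X]big1 ?addr0 //.
move=> k /andP[/andP[lt_p1k lt_kn] _].
by rewrite F0 // eq_sym ltn_eqF // ltnW.
Qed.

Lemma bmulE0 (R : pzRingType) (w : nat) (A B : simx R) (i j : nat) :
  A i 0%N = 0 -> bmul w A B i j = \sum_(0 <= k < (i + w).+1) A i k * B k j.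
Proof. by move=> Ai0; rewrite /bmul [RHS]big_ltn // Ai0 mul0r add0r. Qed.

Lemma bmul1_diag_col2 (R : pzRingType) (A B : simx R) (i : nat) :
  A i 0%N = 0 -> (forall k, k != i -> k != i.+1 -> B k i = 0) ->
  bmul 1 A B i i = A i i * B i i + A i i.+1 * B i.+1 i.
Proof.
move=> Ai0 B0; rewrite bmulE0 // (@big_nat_supp2 _ _ i) ?addn1 // => k _ ki ki1.
by rewrite B0 ?mulr0.
Qed.

Lemma bmul1_diag_row2 (R : pzRingType) (A B : simx R) (i : nat) :
  A i.+1 0%N = 0 -> (forall k, k != i -> k != i.+1 -> A i.+1 k = 0) ->
  bmul 1 A B i.+1 i.+1 = A i.+1 i * B i i.+1 + A i.+1 i.+1 * B i.+1 i.+1.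
Proof.
move=> Ai0 A0; rewrite bmulE0 // (@big_nat_supp2 _ _ i) ?addn1 // => k _ ki ki1.
by rewrite A0 ?mul0r.
Qed.

Section LaxDiagonal.
Variables (R : unitRingType) (theta : int -> nat -> R).

Lemma Mmat_eq0 (m : int) (i j : nat) :
  j != i -> i != j.+1 -> Mmat theta m i j = 0.
Proof. by move=> /negbTE ji /negbTE ij; rewrite /Mmat ji ij !if_same. Qed.

Lemma Mmat_col0 (m : int) (i : nat) : Mmat theta m i 0%N = 0.
Proof. by rewrite /Mmat orbT. Qed.

Lemma Lmat_col0 (m : int) (i : nat) : Lmat theta m i 0%N = 0.
Proof. by rewrite /Lmat orbT. Qed.

Lemma Mmat_diag (m : int) (i : nat) : Mmat theta m i.+1 i.+1 = 1.
Proof. by rewrite /Mmat eqxx. Qed.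

Lemma Mmat_subdiag (m : int) (i : nat) :
  Mmat theta m i.+1 i = theta (m - 1) i.+1 * thinv theta m i.
Proof.
case: i => [|i]; first by rewrite Mmat_col0 /thinv mulr0.
by rewrite /Mmat /= ltn_eqF // eqxx.
Qed.

Lemma Lmat_diag (m : int) (i : nat) :
  Lmat theta m i.+1 i.+1 = acoef theta (m - 1) i.+1 + bcoef theta m i.+1.
Proof. by rewrite /Lmat /= ltn_eqF // eqxx. Qed.

Lemma Lmat_superdiag (m : int) (i : nat) : Lmat theta m i.+1 i.+2 = 1.
Proof. by rewrite /Lmat /= eqxx. Qed.

Lemma bmul_LM_diag (m m' : int) (i : nat) :
  bmul 1 (Lmat theta m') (Mmat theta m) i.+1 i.+1
  = acoef theta (m' - 1) i.+1 + bcoef theta m' i.+1 + bcoef theta m i.+1.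
Proof.
rewrite bmul1_diag_col2 ?Lmat_col0 //; last first.
  by move=> k ki ki1; rewrite Mmat_eq0 // eq_sym.
by rewrite Mmat_diag Lmat_superdiag Lmat_diag Mmat_subdiag mulr1 mul1r.
Qed.

Lemma bmul_ML_diag (m m' : int) (i : nat) :
  bmul 1 (Mmat theta m) (Lmat theta m') i.+1 i.+1
  = theta (m - 1) i.+1 * thinv theta m i
    + (acoef theta (m' - 1) i.+1 + bcoef theta m' i.+1).
Proof.
rewrite bmul1_diag_row2 ?Mmat_col0 //; last first.
  by move=> k ki ki1; rewrite Mmat_eq0 // eqSS eq_sym.
rewrite Mmat_subdiag Mmat_diag Lmat_diag mul1r.
case: i => [|i]; first by rewrite /thinv /= !mulr0.
by rewrite Lmat_superdiag mulr1.
Qed.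

Lemma lax_diag (m : int) (i : nat) :
  bmul 1 (Lmat theta (m - 1)) (Mmat theta m) i.+1 i.+1
    = bmul 1 (Mmat theta m) (Lmat theta m) i.+1 i.+1 ->
  theta (m - 1) i.+1 * (theta (m - 2) i.+1)^-1
    + theta (m - 2) i.+2 * (theta (m - 1) i.+1)^-1
  = theta m i.+1 * (theta (m - 1) i.+1)^-1
    + theta (m - 1) i.+1 * thinv theta m i.
Proof.
have m11 : m - 1 - 1 = m - 2 by ring.
rewrite bmul_LM_diag bmul_ML_diag !addrA => /addIr.
by rewrite /acoef /bcoef !subrK m11 => ->; rewrite addrC.
Qed.

End LaxDiagonal.

Theorem proposition4p3 (F : fieldType) (R : unitAlgType F)
  (charF0 : [pchar F] =i pred0)
  (divR : forall x : R, x != 0 -> x \is a GRing.unit)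
  (theta : int -> nat -> R)
  (theta_unit : forall (m : int) (n : nat), (0 < n)%N -> theta m n \is a GRing.unit)
  (Hlax : forall (m : int) (i j : nat), (0 < i)%N -> (0 < j)%N ->
     bmul 1 (Lmat theta (m - 1)) (Mmat theta m) i j
     = bmul 1 (Mmat theta m) (Lmat theta m) i j) :
  forall (m : int) (n : nat), (0 < n)%N ->
    theta (m + 2) n
    = theta m n.+1
      + theta (m + 1) n * ((theta m n)^-1 - thinv theta (m + 2) n.-1)
        * theta (m + 1) n.
Proof.
move=> m [//|n] _.
have := lax_diag (Hlax (m + 2) n.+1 n.+1 isT isT).
have -> : m + 2 - 1 = m + 1 by ring.
rewrite addrK; set u := theta (m + 1) n.+1.
have u_unit : u \is a GRing.unit by exact: theta_unit.
move=> /(congr1 (fun x => x * u)); rewrite !mulrDl !divrK // => diag_u.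
by rewrite mulrBr mulrBl [RHS]addrA [_ + u / _ * u]addrC diag_u addrK.
Qed.
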